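(* Let $X$ be a bounded geometry metric space that does not have the operator norm localization property. Then there exist $R>0$, $\kappa<1$, a sequence $(T_n)$ of operators in $\mathbb{C}_R[X]$, a sequence $(B_n)$ of finite subsets of $X$, and a sequence $(S_n)$ of positive real numbers such that: (a) $(S_n)$ is increasing and $S_n\to\infty$; (b) each $T_n$ is positive and of norm one; (c) $B_n\cap B_m=\emptyset$ for $n\ne m$; (d) if $P_n:\ell^2(X)\to\ell^2(B_n)$ is the orthogonal projection, then $P_nT_nP_n=T_n$; (e) for each $n$ and every $\xi\in\ell^2(X)$ with $\|\xi\|=1$ and $\operatorname{diam}(\operatorname{Supp}(\xi))\le S_n$, one has $\|T_n\xi\|\le\kappa$.
   Context: A metric space $X$ has bounded geometry if for each $R>0$ there is $N$ such that every ball of radius $R$ contains at most $N$ points. With $\{\delta_x\}$ the standard basis of $\ell^2(X)$ and $T_{xy}=\langle\delta_x,T\delta_y\rangle$, the propagation of a bounded operator $T$ is $\sup\{d(x,y):T_{xy}\neq0\}$, and $\mathbb{C}_R[X]$ is the set of bounded operators on $\ell^2(X)$ of propagation at most $R$. $X$ has the operator norm localization property (ONL) if for all $R\ge0$ and $c\in(0,1)$ there exists $S>0$ such that for every $T\in\mathbb{C}_R[X]$ of norm one there is $\xi\in\ell^2(X)$ of norm one with $\operatorname{diam}(\operatorname{Supp}(\xi))\le S$ and $\|T\xi\|\ge c$. *)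

From HB Require Import structures.
From mathcomp Require Import all_boot all_order all_algebra.
From mathcomp Require Import all_classical all_reals.
From mathcomp Require Import topology normedtype sequences esum.
From mathcomp Require Import complex.
Set Implicit Arguments. Unset Strict Implicit. Unset Printing Implicit Defensive.
Import Order.TTheory GRing.Theory Num.Theory.
Local Open Scope classical_set_scope.
Local Open Scope ring_scope.

Section L2.
Variable R : realType.
Local Notation C := R[i].
Variable X : choiceType.

Definition is_metric (d : X -> X -> R) : Prop :=
  [/\ forall x y, 0 <= d x y,
      forall x y, d x y = 0 <-> x = y,
      forall x y, d x y = d y x &
      forall x y z, d x z <= d x y + d y z].

(* bounded geometry: every closed ball of radius r contains at most N points
   (no N.+1 pairwise distinct points lie in a ball of radius r). *)
Definition bounded_geometry (d : X -> X -> R) : Prop :=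
  forall r : R, 0 < r -> exists N : nat, forall (x : X) (f : 'I_N.+1 -> X),
    injective f -> exists i, r < d x (f i).

Definition csq (z : C) : R := (@complex.Re R z) ^+ 2 + (@complex.Im R z) ^+ 2.

Definition sqnorm (xi : X -> C) : \bar R := \esum_(x in [set: X]) (csq (xi x))%:E.

Definition l2 (xi : X -> C) : Prop := (sqnorm xi < +oo)%E.

Definition norm2 (xi : X -> C) : R := Num.sqrt (fine (sqnorm xi)).

(* sum over X of an absolutely summable real family *)
Definition rsum (g : X -> R) : R :=
  fine (\esum_(x in [set: X]) (Num.max (g x) 0)%:E)
  - fine (\esum_(x in [set: X]) (Num.max (- g x) 0)%:E).

Definition csum (f : X -> C) : C :=
  @Complex R (rsum (fun x => @complex.Re R (f x))) (rsum (fun x => @complex.Im R (f x))).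

Definition inner (xi eta : X -> C) : C := csum (fun x => (conjc (xi x)) * eta x).

Definition delta (y : X) : X -> C := fun x => if pselect (x = y) then 1 else 0.

Definition supp (xi : X -> C) : set X := [set x | xi x <> 0].

Definition diam_le (d : X -> X -> R) (A : set X) (S : R) : Prop :=
  forall x y, A x -> A y -> d x y <= S.

(* Operators: maps on functions X -> C; only their behaviour on l^2 matters. *)
Definition bounded_op (T : (X -> C) -> (X -> C)) : Prop :=
  [/\ forall xi, l2 xi -> l2 (T xi),
      forall (a : C) xi eta, l2 xi -> l2 eta ->
        T (fun x => a * xi x + eta x) = (fun x => a * T xi x + T eta x) &
      exists M : R, forall xi, l2 xi -> norm2 (T xi) <= M * norm2 xi].

Definition opnorm (T : (X -> C) -> (X -> C)) : R :=
  sup [set norm2 (T xi) | xi in [set xi | l2 xi /\ norm2 xi <= 1]].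

Definition coef (T : (X -> C) -> (X -> C)) (x y : X) : C := T (delta y) x.

Definition in_CR (d : X -> X -> R) (r : R) (T : (X -> C) -> (X -> C)) : Prop :=
  bounded_op T /\ forall x y, coef T x y <> 0 -> d x y <= r.

Definition positive_op (T : (X -> C) -> (X -> C)) : Prop :=
  forall xi, l2 xi -> 0 <= inner xi (T xi).

Definition restr_ind (B : set X) (xi : X -> C) : X -> C :=
  fun x => if pselect (B x) then xi x else 0.

Definition ONL (d : X -> X -> R) : Prop :=
  forall (r c : R), 0 <= r -> 0 < c < 1 -> exists S : R, 0 < S /\
    forall T, in_CR d r T -> opnorm T = 1 ->
      exists xi, [/\ l2 xi, norm2 xi = 1, diam_le d (supp xi) S & c <= norm2 (T xi)].

End L2.

From mathcomp Require Import all_boot all_order all_algebra.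
From mathcomp Require Import all_classical all_reals.
From mathcomp Require Import topology normedtype sequences esum.
From mathcomp Require Import complex.
From mathcomp Require Import ring lra.
Import Order.TTheory GRing.Theory Num.Theory.
Local Open Scope classical_set_scope.
Local Open Scope ring_scope.
Set Implicit Arguments. Unset Strict Implicit. Unset Printing Implicit Defensive.

(* Negating ONL gives r0 >= 0 and c < 1 such that, for every S, some norm-one T of
   propagation r0 satisfies ||T xi|| < c on unit vectors whose support has diameter <= S.
   Given the finite set F of points already used and a scale s, take such a T for a much
   larger S and approximate ||T|| = 1 by a finitely supported xi and a finite window G.
   Among k concentric annuli of width 4(r0 + 1) around F one carries mass <= 1/k; cutting
   xi there, finite propagation confines the cross term to that annulus, and the part of xi
   near F has small support diameter.  Hence the far part v, supported on a finite K
   disjoint from F, has ||P_G T v||^2 >= (1 + c)/2 ||v||^2.  The positive operator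
   A = P_K T^* P_G T P_K then has norm >= (1 + c)/2 and propagation 2 r0, while ||A xi|| <= c
   whenever the support of xi has diameter <= s; A / ||A|| is the next block. *)

Lemma ler_term_sum (R : numDomainType) (I : eqType) (r : seq I) (F : I -> R) i :
  (forall j, 0 <= F j) -> i \in r -> F i <= \sum_(j <- r) F j.
Proof.
move=> F0; elim: r => [|j r IH] //; rewrite inE big_cons => /orP [/eqP ->|ir].
  by rewrite lerDl sumr_ge0.
by apply: le_trans (IH ir) _; rewrite lerDr.
Qed.

Lemma sum_pred_le1 (R : numDomainType) (r : seq nat) (p : pred nat) (a : R) :
  uniq r -> (forall i j, p i -> p j -> i = j) -> 0 <= a -> \sum_(j <- r) (p j)%:R * a <= a.
Proof.
move=> ur pe a0; elim: r ur => [|i r IH] /=; first by rewrite big_nil.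
move=> /andP [ir ur]; rewrite big_cons; case: (boolP (p i)) => pi; last by rewrite mul0r add0r IH.
rewrite big_seq big1 ?addr0 ?mul1r // => j jr.
by case: (boolP (p j)) => pj; [move: ir; rewrite (pe _ _ pi pj) jr | rewrite mul0r].
Qed.

Section ComplexSquare.
Variable R : realType.
Local Notation C := R[i].
Local Notation Re := (@complex.Re R).
Local Notation Im := (@complex.Im R).
Local Open Scope complex_scope.

Lemma csq_ge0 (z : C) : 0 <= csq z.
Proof. by rewrite /csq addr_ge0 // sqr_ge0. Qed.

Lemma csq0 : csq (0 : C) = 0.
Proof. by rewrite /csq /= expr0n /= addr0. Qed.

Lemma csq_eq0 (z : C) : (csq z == 0) = (z == 0).
Proof.
case: z => a b; rewrite /csq /= paddr_eq0 ?sqr_ge0 // !sqrf_eq0.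
by rewrite eq_complex.
Qed.

Lemma csqM (x y : C) : csq (x * y) = csq x * csq y.
Proof. by case: x => a b; case: y => c e; rewrite /csq /=; ring. Qed.

Lemma csq_real (k : R) : csq k%:C = k ^+ 2.
Proof. by rewrite /csq /= expr0n /= addr0. Qed.

Lemma csqZ (k : R) (z : C) : csq (k%:C * z) = k ^+ 2 * csq z.
Proof. by rewrite csqM csq_real. Qed.

Lemma csqJM (z : C) : z^* * z = (csq z)%:C.
Proof. by case: z => a b; rewrite /csq /=; congr Complex; ring. Qed.

Lemma csqD (a b : C) : csq (a + b) = csq a + csq b + 2 * Re (a^* * b).
Proof. by case: a => a1 a2; case: b => b1 b2; rewrite /csq /=; ring. Qed.

Lemma ReJM_le (t : R) (a b : C) : 0 < t -> 2 * Re (a^* * b) <= t * csq a + csq b / t.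
Proof.
move=> t0; case: a => a1 a2; case: b => b1 b2; rewrite /csq /= -subr_ge0.
have -> : t * (a1 ^+ 2 + a2 ^+ 2) + (b1 ^+ 2 + b2 ^+ 2) / t - 2 * (a1 * b1 - - a2 * b2)
    = ((t * a1 - b1) ^+ 2 + (t * a2 - b2) ^+ 2) / t.
  by field; rewrite gt_eqF.
by rewrite divr_ge0 ?addr_ge0 ?sqr_ge0 ?ltW.
Qed.

Lemma ReJM_le1 (a b : C) : 2 * Re (a^* * b) <= csq a + csq b.
Proof. by have := ReJM_le a b ltr01; rewrite mul1r divr1. Qed.

Lemma csqD_le (h : R) (a b : C) : 0 < h ->
  csq (a + b) <= (1 + h) * csq a + (1 + h^-1) * csq b.
Proof.
move=> h0; rewrite csqD; have := ReJM_le a b h0.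
have -> : (1 + h) * csq a + (1 + h^-1) * csq b = csq a + csq b + (h * csq a + csq b / h).
  by rewrite mulrC [_ * csq b]mulrC; ring.
by move=> H; rewrite lerD2l.
Qed.

End ComplexSquare.

Section FiniteSupport.
Variables (R : realType) (X : choiceType).
Local Notation C := R[i].
Local Open Scope complex_scope.
Implicit Types (f : X -> C) (s : seq X).

Definition vanish_off s f := forall x, x \notin s -> f x = 0.

Definition sqnorm_on s f : R := \sum_(x <- s) csq (f x).

Definition restr (p : pred X) f : X -> C := fun x => if p x then f x else 0.

Lemma esum_seq s (g : X -> R) : uniq s -> (forall x, x \notin s -> g x = 0) ->
  (forall x, 0 <= g x) -> \esum_(x in [set: X]) (g x)%:E = (\sum_(x <- s) g x)%:E.
Proof.
move=> us gs g0.
transitivity (\esum_(x in [set: X]) (if x \in [set` s] then (g x)%:E else 0%E)).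
  by apply: eq_esum => x _; case: ifP => //; rewrite mem_setE => /negbT/gs ->.
rewrite -esum_mkcond esum_fset; last by move=> x _; rewrite lee_fin.
  by rewrite -fsbig_seq // sumEFin.
exact: finite_seq.
Qed.

Lemma esum_gt_sum (g : X -> R) (a : R) : (a%:E < \esum_(x in [set: X]) (g x)%:E)%E ->
  exists2 s, uniq s & a < \sum_(x <- s) g x.
Proof.
move=> /ereal.ereal_sup_gt [_ [A [finA _] <-]] lt.
exists (finmap.enum_fset (fset_set A)); first exact: finmap.fset_uniq.
by move: lt; rewrite fsbig_finite // sumEFin lte_fin.
Qed.

Lemma sqnorm_onE s f : sqnorm_on s f = complex.Re (\sum_(y <- s) (f y)^* * f y).
Proof. by rewrite (raddf_sum (@complex.Re R)); apply: eq_bigr => y _; rewrite csqJM. Qed.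

Lemma sqnorm_on_ge0 s f : 0 <= sqnorm_on s f.
Proof. by apply: sumr_ge0 => x _; apply: csq_ge0. Qed.

Lemma sqnorm_onZ s (k : R) f : sqnorm_on s (fun x => k%:C * f x) = k ^+ 2 * sqnorm_on s f.
Proof. by rewrite /sqnorm_on mulr_sumr; apply: eq_bigr => x _; rewrite csqZ. Qed.

Lemma eq_sqnorm_on s f g : {in s, f =1 g} -> sqnorm_on s f = sqnorm_on s g.
Proof. by move=> fg; rewrite /sqnorm_on !big_seq; apply: eq_bigr => x /fg ->. Qed.

Lemma sqnorm_onD_le s (h : R) f g : 0 < h -> sqnorm_on s (fun x => f x + g x)
  <= (1 + h) * sqnorm_on s f + (1 + h^-1) * sqnorm_on s g.
Proof.
move=> h0; rewrite /sqnorm_on !mulr_sumr -big_split /=.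
by apply: ler_sum => x _; apply: csqD_le.
Qed.

Lemma csq_restr p f x : csq (restr p f x) = (p x)%:R * csq (f x).
Proof. by rewrite /restr; case: (p x); rewrite ?mul1r ?mul0r ?csq0. Qed.

Lemma sqnorm_on_restr s p f :
  sqnorm_on s f = sqnorm_on s (restr p f) + sqnorm_on s (restr (predC p) f).
Proof.
rewrite /sqnorm_on -big_split; apply: eq_bigr => x _; rewrite /restr /=.
by case: (p x); rewrite csq0 ?addr0 ?add0r.
Qed.

Lemma vanish_off_restr s p f : vanish_off s f -> vanish_off s (restr p f).
Proof. by move=> vf x /vf; rewrite /restr => ->; case: (p x). Qed.

Lemma vanish_off_mem s f : vanish_off s (restr (mem s) f).
Proof. by move=> x /negbTE xs; rewrite /restr /= xs. Qed.

Lemma vanish_off_eq0 s f : vanish_off s f -> sqnorm_on s f = 0 -> f = (fun _ => 0).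
Proof.
move=> vf f0; apply/funext => x; have [xs|/vf//] := boolP (x \in s).
apply/eqP; rewrite -csq_eq0 eq_le csq_ge0 andbT -f0.
by apply: (ler_term_sum (F := fun x => csq (f x))) => // y; apply: csq_ge0.
Qed.

Lemma normalize_on s f : 0 < sqnorm_on s f ->
  sqnorm_on s (fun x => ((Num.sqrt (sqnorm_on s f))^-1)%:C * f x) = 1.
Proof.
by move=> f0; rewrite sqnorm_onZ exprVn sqr_sqrtr ?mulVf ?gt_eqF // ltW.
Qed.

Lemma sqnorm_seq s f : uniq s -> vanish_off s f -> sqnorm f = (sqnorm_on s f)%:E.
Proof.
move=> us vs; rewrite /sqnorm (esum_seq us) // => [x /vs ->|x]; [exact: csq0|exact: csq_ge0].
Qed.

Lemma l2_seq s f : uniq s -> vanish_off s f -> l2 f.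
Proof. by move=> us vs; rewrite /l2 (sqnorm_seq us vs) ltry. Qed.

Lemma norm2_seq s f : uniq s -> vanish_off s f -> norm2 f = Num.sqrt (sqnorm_on s f).
Proof. by move=> us vs; rewrite /norm2 (sqnorm_seq us vs). Qed.

Lemma l2_0 : l2 (fun _ : X => 0 : C).
Proof. exact: (@l2_seq [::]). Qed.

Lemma deltaE y x : @delta R X y x = (x == y)%:R.
Proof. by rewrite /delta; case: pselect => [e|/eqP/negbTE ->] //=; move/eqP: e => ->. Qed.

Lemma l2_delta y : l2 (@delta R X y).
Proof. by apply: (@l2_seq [:: y]) => // x; rewrite inE deltaE => /negbTE ->. Qed.

Lemma restr_addC p f : (fun x => restr p f x + restr (predC p) f x) = f.
Proof. by apply/funext => x; rewrite /restr /=; case: (p x); rewrite ?addr0 ?add0r. Qed.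

Lemma sqnorm_restr p f : sqnorm f = (sqnorm (restr p f) + sqnorm (restr (predC p) f))%E.
Proof.
rewrite /sqnorm -esumD => [|x _|x _]; rewrite ?lee_fin ?csq_ge0 //.
by apply: eq_esum => x _; rewrite /restr /=; case: (p x); rewrite csq0 ?adde0 ?add0e.
Qed.

Lemma sqnorm_ge0 f : (0 <= sqnorm f)%E.
Proof. by apply: esum_ge0 => x _; rewrite lee_fin csq_ge0. Qed.

Lemma norm2_sq f : norm2 f ^+ 2 = fine (sqnorm f).
Proof. by rewrite /norm2 sqr_sqrtr // fine_ge0 // sqnorm_ge0. Qed.

Lemma sqnormE f : l2 f -> sqnorm f = (norm2 f ^+ 2)%:E.
Proof. by move=> hf; rewrite norm2_sq fineK // ge0_fin_numE // sqnorm_ge0. Qed.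

Lemma norm2_ge0 f : 0 <= norm2 f.
Proof. exact: sqrtr_ge0. Qed.

Lemma sqnorm_on_le_norm2 s f : uniq s -> l2 f -> sqnorm_on s f <= norm2 f ^+ 2.
Proof.
move=> us hf; rewrite -lee_fin -sqnormE //; apply: esum_ge; exists [set` s].
  by split; [exact: finite_seq|].
by rewrite -fsbig_seq // sumEFin.
Qed.

Lemma sqnorm_gt_on f (a : R) : l2 f -> a < norm2 f ^+ 2 ->
  exists2 s, uniq s & a < sqnorm_on s f.
Proof. by move=> hf; rewrite -lte_fin -sqnormE //; apply: esum_gt_sum. Qed.

Lemma l2_tail_small f (e : R) : l2 f -> 0 < e -> exists2 s, uniq s &
  l2 (restr (predC (mem s)) f) /\ norm2 (restr (predC (mem s)) f) ^+ 2 < e.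
Proof.
move=> hf e0; have [|s us lt] := @sqnorm_gt_on f (norm2 f ^+ 2 - e) hf; first lra.
have tailE : sqnorm (restr (predC (mem s)) f) = (norm2 f ^+ 2 - sqnorm_on s f)%:E.
  move: (sqnorm_restr (mem s) f); rewrite sqnormE // (sqnorm_seq us (@vanish_off_mem s f)).
  rewrite (eq_sqnorm_on (g := f)) => [|x /= xs]; last by rewrite /restr /= xs.
  by case: (sqnorm _) => //= r [->]; congr EFin; ring.
by exists s => //; rewrite /l2 norm2_sq tailE ltry /=; split => //; lra.
Qed.

Lemma rsum_seq s (g : X -> R) : uniq s -> (forall x, x \notin s -> g x = 0) ->
  rsum g = \sum_(x <- s) g x.
Proof.
move=> us vg; rewrite /rsum.
rewrite (esum_seq (g := fun x => Num.max (g x) 0) us); first last.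
- by move=> x; rewrite le_max lexx orbT.
- by move=> x /vg ->; rewrite maxxx.
rewrite (esum_seq (g := fun x => Num.max (- g x) 0) us); first last.
- by move=> x; rewrite le_max lexx orbT.
- by move=> x /vg ->; rewrite oppr0 maxxx.
rewrite /= -sumrB; apply: eq_bigr => x _.
by case: (lerP 0 (g x)) => h; case: (lerP 0 (- g x)) => h'; lra.
Qed.

Lemma inner_seq s (xi eta : X -> C) : uniq s -> vanish_off s eta ->
  inner xi eta = \sum_(x <- s) (xi x)^* * eta x.
Proof.
move=> us ve; have vF x : x \notin s -> (xi x)^* * eta x = 0 by move/ve ->; rewrite mulr0.
rewrite /inner /csum (rsum_seq us) => [|x /vF ->//].
rewrite (rsum_seq us) => [|x /vF ->//].
by rewrite -(raddf_sum (@complex.Re R)) -(raddf_sum (@complex.Im R)); case: (\sum_(x <- s) _).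
Qed.

End FiniteSupport.

Arguments l2_0 {R X}.
Arguments vanish_off_mem {R X} s f.

Section BoundedOperator.
Variables (R : realType) (X : choiceType).
Local Notation C := R[i].
Local Open Scope complex_scope.
Variable T : (X -> C) -> (X -> C).
Hypothesis bT : bounded_op T.

Lemma op_l2 xi : l2 xi -> l2 (T xi).
Proof. by case: bT => H _ _; apply: H. Qed.

Lemma op_linear a xi eta : l2 xi -> l2 eta ->
  T (fun x => a * xi x + eta x) = (fun x => a * T xi x + T eta x).
Proof. by case: bT => _ H _; apply: H. Qed.

Lemma op0 : T (fun _ => 0) = (fun _ => 0).
Proof.
have := op_linear 1 l2_0 l2_0; under [fun x => _]funext do rewrite mulr0 addr0.
move=> H; apply/funext => x; have /(congr1 (fun f => f x)) := H.
by rewrite mul1r => /eqP; rewrite eq_sym -subr_eq0 addrK => /eqP.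
Qed.

Lemma opZ a xi : l2 xi -> T (fun x => a * xi x) = (fun x => a * T xi x).
Proof.
move=> hxi; have := op_linear a hxi l2_0; rewrite op0.
by under [fun x => _ + 0]funext do rewrite addr0; under [RHS]funext do rewrite addr0.
Qed.

Lemma opD xi eta : l2 xi -> l2 eta -> T (fun x => xi x + eta x) = (fun x => T xi x + T eta x).
Proof.
move=> h1 h2; have := op_linear 1 h1 h2.
by under [fun x => 1 * _ + _]funext do rewrite mul1r; under [RHS]funext do rewrite mul1r.
Qed.

Lemma op_restrD p xi : l2 xi ->
  T xi = (fun y => T (restr p xi) y + T (restr (predC p) xi) y).
Proof.
move=> hxi; have l2r q : l2 (restr q xi).
  apply: le_lt_trans hxi; rewrite /sqnorm le_esum // => x _.
  by rewrite lee_fin csq_restr ler_piMl ?csq_ge0 // lern1 leq_b1.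
by rewrite -opD // restr_addC.
Qed.

Lemma op_expand s u x : uniq s -> vanish_off s u -> T u x = \sum_(y <- s) u y * coef T x y.
Proof.
elim: s u => [|y s IH] u.
  move=> _ vu; have -> : u = (fun _ => 0) by apply/funext => z; apply: vu.
  by rewrite op0 big_nil.
move=> /= /andP [ys us] vu.
pose u' := restr (predC1 y) u.
have vu' : vanish_off s u'.
  move=> z zs; rewrite /u' /restr /=; case: eqP => //= /eqP zy; apply: vu.
  by rewrite inE negb_or zy.
have eu : (fun z => u y * @delta R X y z + u' z) = u.
  apply/funext => z; rewrite deltaE /u' /restr /=.
  by case: eqP => [->|_]; rewrite ?mulr1 ?addr0 ?mulr0 ?add0r.
have -> : T u x = u y * coef T x y + T u' x.
  by rewrite -[in LHS]eu op_linear //; [exact: l2_delta|exact: l2_seq us vu'].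
rewrite big_cons (IH u' us vu').
congr (_ + _); rewrite !big_seq; apply: eq_bigr => z zs.
by rewrite /u' /restr /=; case: eqP zs ys => [->->|].
Qed.

Lemma has_sup_opnorm : has_sup [set norm2 (T xi) | xi in [set xi | l2 xi /\ norm2 xi <= 1]].
Proof.
case: bT => _ _ [M HM]; split.
  exists (norm2 (T (fun _ => 0))), (fun _ => 0) => //; split; first exact: l2_0.
  by rewrite (@norm2_seq _ _ [::]) // /sqnorm_on big_nil sqrtr0.
exists (Num.max M 0) => _ [xi [hxi hn] <-]; apply: le_trans (HM _ hxi) _.
have [M0|M0] := leP 0 M; first by rewrite -[leRHS]mulr1 ler_wpM2l // le_max lexx.
by rewrite nmulr_rle0 // ?norm2_ge0 // le_max lexx orbT.
Qed.

Lemma le_opnorm xi : l2 xi -> norm2 xi <= 1 -> norm2 (T xi) <= opnorm T.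
Proof.
move=> h1 h2; have [_ [b hb]] := has_sup_opnorm.
by apply: ub_le_sup; [exists b|exists xi].
Qed.

Lemma lt_opnorm a : a < opnorm T -> exists xi, [/\ l2 xi, norm2 xi <= 1 & a < norm2 (T xi)].
Proof.
move=> aT; have aT' : 0 < opnorm T - a by rewrite subr_gt0.
have [_ [xi [hxi nxi] <-]] := sup_adherent aT' has_sup_opnorm.
by rewrite -/(opnorm T) opprB addrCA subrr addr0 => lt; exists xi.
Qed.

Lemma sqnorm_on_op_le (b : R) s G u : 0 <= b -> uniq s -> uniq G -> vanish_off s u ->
  (forall xi, l2 xi -> norm2 xi = 1 -> supp xi `<=` supp u -> norm2 (T xi) <= b) ->
  sqnorm_on G (T u) <= b ^+ 2 * sqnorm_on s u.
Proof.
move=> b0 us uG vu Hb; have [N0|N0] := eqVneq (sqnorm_on s u) 0.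
  rewrite N0 mulr0 (vanish_off_eq0 vu N0) op0 /sqnorm_on big1 // => x _; exact: csq0.
have Npos : 0 < sqnorm_on s u by rewrite lt_neqAle eq_sym N0 sqnorm_on_ge0.
set l := Num.sqrt (sqnorm_on s u).
have l0 : 0 < l by rewrite sqrtr_gt0.
pose u' x := (l^-1)%:C * u x.
have vu' : vanish_off s u' by move=> x /vu; rewrite /u' => ->; rewrite mulr0.
have hu' : l2 u' := l2_seq us vu'.
have Tu' : norm2 (T u') <= b.
  apply: Hb => //; first by rewrite (norm2_seq us vu') normalize_on // sqrtr1.
  by move=> x; rewrite /supp /u' /= => ux ex; apply: ux; rewrite ex mulr0.
have : sqnorm_on G (T u') <= b ^+ 2.
  apply: le_trans (sqnorm_on_le_norm2 uG (op_l2 hu')) _.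
  by rewrite lerXn2r // ?nnegrE ?norm2_ge0.
rewrite /u' opZ; last exact: l2_seq us vu.
by rewrite sqnorm_onZ exprVn sqr_sqrtr ?sqnorm_on_ge0 // mulrC ler_pdivrMr.
Qed.

Lemma sqnorm_on_op_contr s G u : opnorm T = 1 -> uniq s -> uniq G -> vanish_off s u ->
  sqnorm_on G (T u) <= sqnorm_on s u.
Proof.
move=> oT us uG vu; rewrite -[leRHS]mul1r -(expr1n _ 2).
by apply: sqnorm_on_op_le => // xi hxi nxi _; rewrite -oT le_opnorm // nxi.
Qed.

End BoundedOperator.

Lemma sqnorm_on_op_truncate (R : realType) (X : choiceType) (T : (X -> R[i]) -> (X -> R[i]))
    (G : seq X) (xi : X -> R[i]) (e : R) : bounded_op T -> uniq G -> l2 xi -> 0 < e ->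
  exists2 K, uniq K & sqnorm_on G (T xi) - e < sqnorm_on G (T (restr (mem K) xi)).
Proof.
move=> bT uG hxi e0; set A := sqnorm_on G (T xi); have A0 : 0 <= A := sqnorm_on_ge0 _ _.
set h := e / (4 * (A + 1)).
have h0 : 0 < h by rewrite divr_gt0 // mulr_gt0 //; lra.
have hA : h * A + h = e / 4 by rewrite /h; field; lra.
case: (bT) => _ _ [M HM].
have M0 : 0 < M ^+ 2 + 1 by have := sqr_ge0 M; lra.
have hV0 : 0 < h^-1 by rewrite invr_gt0.
set del := e / (2 * (1 + h^-1) * (M ^+ 2 + 1)).
have del0 : 0 < del by rewrite /del divr_gt0 ?mulr_gt0 //; lra.
have [K uK [ht nt]] := l2_tail_small hxi del0; exists K => //.
set t := restr (predC (mem K)) xi in ht nt; set B := sqnorm_on G (T (restr (mem K) xi)).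
have tail : (1 + h^-1) * sqnorm_on G (T t) <= e / 2.
  have -> : e / 2 = (1 + h^-1) * ((M ^+ 2 + 1) * del).
    by rewrite /del; field; rewrite !gt_eqF // ltr_wpDr // ltW.
  apply: ler_wpM2l; first by rewrite addr_ge0 // ltW.
  apply: le_trans (sqnorm_on_le_norm2 uG (op_l2 bT ht)) _.
  apply: le_trans (_ : (M * norm2 t) ^+ 2 <= _).
    by rewrite lerXn2r ?nnegrE ?HM ?norm2_ge0 //; apply: le_trans (HM _ ht); exact: norm2_ge0.
  rewrite exprMn; apply: le_trans (_ : M ^+ 2 * del <= _).
    by rewrite ler_wpM2l ?sqr_ge0 // ltW.
  by rewrite ler_wpM2r ?lerDl // ltW.
have := sqnorm_onD_le G (T (restr (mem K) xi)) (T t) h0.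
rewrite -(op_restrD bT (mem K) hxi) -/A -/B => AB.
rewrite ltNge; apply/negP => BA; have : h * B <= h * A by rewrite ler_wpM2l ?ltW //; lra.
lra.
Qed.

Lemma finite_approx (R : realType) (X : choiceType) (T : (X -> R[i]) -> (X -> R[i])) (g : R) :
  bounded_op T -> opnorm T = 1 -> g < 1 -> exists s xi G,
  [/\ uniq s, vanish_off s xi, sqnorm_on s xi <= 1, uniq G & g < sqnorm_on G (T xi)].
Proof.
move=> bT oT g1; wlog g0 : g g1 / 0 <= g.
  move=> H; have [g0|g0] := leP 0 g; first exact: H.
  have [s [xi [G [? ? ? ? lt0]]]] := H 0 ltr01 (lexx 0).
  by exists s, xi, G; split => //; apply: lt_trans lt0.
have [|xi [hxi nxi lt0]] := lt_opnorm bT (a := (1 + g) / 2); first by rewrite oT; lra.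
have gTxi : g < norm2 (T xi) ^+ 2 by have := norm2_ge0 (T xi); nra.
have [G uG gA] := sqnorm_gt_on (op_l2 bT hxi) gTxi.
have [|K uK AB] := sqnorm_on_op_truncate bT uG hxi (e := sqnorm_on G (T xi) - g); first lra.
exists K, (restr (mem K) xi), G; split => //; last by lra.
- exact: vanish_off_mem.
rewrite (eq_sqnorm_on (g := xi)) => [|x xK]; last by rewrite /restr /= xK.
apply: le_trans (sqnorm_on_le_norm2 uK hxi) _.
by rewrite -(expr1n _ 2) lerXn2r ?nnegrE ?norm2_ge0.
Qed.

Section Metric.
Variables (R : realType) (X : choiceType) (d : X -> X -> R).
Hypothesis md : is_metric d.

Lemma dist_ge0 x y : 0 <= d x y. Proof. by case: md. Qed.
Lemma distC x y : d x y = d y x. Proof. by case: md. Qed.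
Lemma dist_triangle x y z : d x z <= d x y + d y z. Proof. by case: md. Qed.
Lemma distxx x : d x x = 0. Proof. by case: md => _ H _ _; apply/H. Qed.

Lemma diam_le_sub (A B : set X) (S S' : R) :
  diam_le d A S -> B `<=` A -> S <= S' -> diam_le d B S'.
Proof. by move=> h BA SS x y Bx By; apply: le_trans (h _ _ (BA _ Bx) (BA _ By)) SS. Qed.

Variable F : seq X.

Definition close_to (a : R) (x : X) : bool := has (fun q => d x q <= a) F.

Definition annulus (a b : R) (x : X) : bool := close_to b x && ~~ close_to a x.

Lemma close_to_le a b x : a <= b -> close_to a x -> close_to b x.
Proof. by move=> ab /hasP [q qF h]; apply/hasP; exists q => //; apply: le_trans ab. Qed.

Lemma close_toD a r x y : close_to a x -> d x y <= r -> close_to (a + r) y.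
Proof.
move=> /hasP [q qF h] dxy; apply/hasP; exists q => //.
by apply: le_trans (dist_triangle y x q) _; rewrite distC addrC lerD.
Qed.

Lemma close_to_mem a x : 0 <= a -> x \in F -> close_to a x.
Proof. by move=> a0 xF; apply/hasP; exists x => //; rewrite distxx. Qed.

Definition sum_dist : R := \sum_(p <- F) \sum_(q <- F) d p q.

Lemma sum_dist_ge0 : 0 <= sum_dist.
Proof. by do 2!apply: sumr_ge0 => ? _; apply: dist_ge0. Qed.

Lemma close_to_dist a x y : close_to a x -> close_to a y -> d x y <= 2 * a + sum_dist.
Proof.
move=> /hasP [p pF xp] /hasP [q qF yq].
have pq : d p q <= sum_dist.
  apply: le_trans (_ : \sum_(q' <- F) d p q' <= _).
    by apply: (ler_term_sum (F := d p)) => // z; apply: dist_ge0.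
  apply: (ler_term_sum (F := fun z => \sum_(w <- F) d z w)) => // z.
  by apply: sumr_ge0 => w _; apply: dist_ge0.
have := dist_triangle x p y; have := dist_triangle p q y; rewrite (distC q y); lra.
Qed.

End Metric.

Lemma in_CR_le (R : realType) (X : choiceType) (d : X -> X -> R) (r r' : R)
    (T : (X -> R[i]) -> (X -> R[i])) : r <= r' -> in_CR d r T -> in_CR d r' T.
Proof. by move=> rr' [bT pT]; split=> // x y /pT /le_trans; apply. Qed.

Section FinitePropagation.
Variables (R : realType) (X : choiceType) (d : X -> X -> R) (r0 : R).
Local Notation C := R[i].
Variable T : (X -> C) -> (X -> C).
Hypothesis TC : in_CR d r0 T.

Lemma op_local s (f f' : X -> C) y : uniq s -> vanish_off s f -> vanish_off s f' ->
  (forall z, d y z <= r0 -> f z = f' z) -> T f y = T f' y.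
Proof.
move=> us vf vf' ff'; rewrite !(op_expand TC.1 y us) //; apply: eq_bigr => z _.
have [cz|cz] := eqVneq (coef T y z) 0; first by rewrite cz !mulr0.
by rewrite ff' //; apply: TC.2; apply/eqP.
Qed.

Lemma op_vanish_far s (f : X -> C) y : uniq s -> vanish_off s f ->
  (forall z, d y z <= r0 -> f z = 0) -> T f y = 0.
Proof.
by move=> us vf f0; rewrite (@op_local s f (fun _ => 0)) // (op0 TC.1).
Qed.

End FinitePropagation.

Section Annuli.
Variables (R : realType) (X : choiceType) (d : X -> X -> R).
Local Notation C := R[i].
Local Open Scope complex_scope.
Variables (F s : seq X) (xi : X -> C).

Lemma sqnorm_on_annulus_split a m b : a <= m -> m <= b ->
  sqnorm_on s (restr (annulus d F a m) xi) + sqnorm_on s (restr (annulus d F m b) xi)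
  = sqnorm_on s (restr (annulus d F a b) xi).
Proof.
move=> am mb; rewrite /sqnorm_on -big_split; apply: eq_bigr => x _.
move: (@close_to_le _ _ d F a m x am) (@close_to_le _ _ d F m b x mb).
rewrite /restr /annulus; case: (close_to d F a x); case: (close_to d F m x);
  case: (close_to d F b x) => //= h1 h2; rewrite ?csq0 ?addr0 ?add0r //;
  by [have := h1 isT | have := h2 isT].
Qed.

Lemma thin_annulus (w : R) (k : nat) : 0 < w -> (0 < k)%N -> sqnorm_on s xi <= 1 ->
  exists2 j, (j < k)%N & sqnorm_on s (restr (annulus d F (j%:R * w) (j%:R * w + w)) xi) <= k%:R^-1.
Proof.
move=> w0 k0 xi1; pose E j := sqnorm_on s (restr (annulus d F (j%:R * w) (j%:R * w + w)) xi).
have sumE : \sum_(0 <= j < k) E j <= 1.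
  apply: le_trans xi1; rewrite /E /sqnorm_on exchange_big /=; apply: ler_sum => x _.
  under eq_bigr do rewrite csq_restr.
  apply: sum_pred_le1; [exact: iota_uniq| |exact: csq_ge0].
  suff lt_excl i j : (i < j)%N -> annulus d F (i%:R * w) (i%:R * w + w) x ->
      ~~ annulus d F (j%:R * w) (j%:R * w + w) x.
    move=> i j hi hj; case: (ltngtP i j) => // ij; first by move: (lt_excl _ _ ij hi); rewrite hj.
    by move: (lt_excl _ _ ij hj); rewrite hi.
  move=> ij /andP [hi _]; rewrite /annulus negb_and negbK; apply/orP; right.
  apply: close_to_le hi; rewrite -[X in _ + X]mul1r -mulrDl (ler_wpM2r (ltW w0)) //.
  by rewrite natr1 ler_nat.
apply: contrapT => small.
have : \sum_(0 <= j < k) k%:R^-1 < \sum_(0 <= j < k) E j.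
  apply: ltr_sum_nat => // j /andP [_ jk].
  by rewrite ltNge; apply/negP => Ej; apply: small; exists j.
rewrite sumr_const_nat subn0 -[_ *+ k]mulr_natl mulfV ?pnatr_eq0 -?lt0n //.
by move=> /lt_le_trans /(_ sumE); rewrite ltxx.
Qed.

End Annuli.

Section PeelLayer.
Variables (R : realType) (X : choiceType) (d : X -> X -> R) (r0 : R).
Local Notation C := R[i].
Local Open Scope complex_scope.
Variables (T : (X -> C) -> (X -> C)) (F s : seq X) (xi : X -> C).
Hypotheses (md : is_metric d) (TC : in_CR d r0 T) (us : uniq s) (vxi : vanish_off s xi).

(* At a point y where both T u and T v are nonzero, y is within r0 of the sphere of radius m,
   so T u y and T v y only see the shells annulus a m and annulus m b. *)
Lemma cross_term_le a m b y : a + r0 <= m - r0 -> m + r0 + r0 <= b ->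
  2 * complex.Re ((T (restr (close_to d F m) xi) y)^* * T (restr (predC (close_to d F m)) xi) y)
  <= csq (T (restr (annulus d F a m) xi) y) + csq (T (restr (annulus d F m b) xi) y).
Proof.
move=> am mb; set u := restr _ xi; set v := restr _ xi.
set uL := restr (annulus d F a m) xi; set vL := restr (annulus d F m b) xi.
have vu : vanish_off s u := vanish_off_restr _ vxi.
have vv : vanish_off s v := vanish_off_restr _ vxi.
have [->|nu] := eqVneq (T u y) 0.
  by rewrite rmorph0 mul0r /= mulr0 addr_ge0 ?csq_ge0.
have [->|nv] := eqVneq (T v y) 0.
  by rewrite mulr0 /= mulr0 addr_ge0 ?csq_ge0.
have yu : close_to d F (m + r0) y.
  apply: contraNT nu => ym; apply/eqP; apply: (op_vanish_far TC us vu) => z dyz.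
  rewrite /u /restr; case: ifP => // zm; move: ym.
  by rewrite (close_toD md zm) // distC.
have yv : ~~ close_to d F (m - r0) y.
  apply: contraNN nv => ym; apply/eqP; apply: (op_vanish_far TC us vv) => z dyz.
  by have := close_toD md ym dyz; rewrite subrK /v /restr /= => ->.
have -> : T u y = T uL y.
  apply: (op_local TC us vu (vanish_off_restr _ vxi)) => z dyz.
  rewrite /u /uL /restr /annulus; case: (close_to d F m z); rewrite ?andbF ?andbT //=.
  case: (boolP (close_to d F a z)) => //= az; move/negP: yv; case.
  by apply: (close_to_le am); apply: (close_toD md az); rewrite distC.
have -> : T v y = T vL y.
  apply: (op_local TC us vv (vanish_off_restr _ vxi)) => z dyz.
  rewrite /v /vL /restr /annulus /=; case: (close_to d F m z); rewrite ?andbF ?andbT //=.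
  rewrite (_ : close_to d F b z = true) //.
  by apply: (close_to_le mb); apply: (close_toD md yu dyz).
exact: ReJM_le1.
Qed.

Lemma peel_layer (c : R) (k : nat) G : 0 <= r0 -> uniq G -> (0 < k)%N -> sqnorm_on s xi <= 1 ->
  (forall u, vanish_off s u -> sqnorm_on G (T u) <= sqnorm_on s u) ->
  (forall m, 0 <= m <= k%:R * (4 * (r0 + 1)) ->
    sqnorm_on G (T (restr (close_to d F m) xi))
      <= c ^+ 2 * sqnorm_on s (restr (close_to d F m) xi)) ->
  exists2 m, 0 <= m & sqnorm_on G (T xi) <= c ^+ 2 * sqnorm_on s (restr (close_to d F m) xi)
    + sqnorm_on G (T (restr (predC (close_to d F m)) xi)) + k%:R^-1.
Proof.
move=> r00 uG k0 xi1 contr near_bound; set w := 4 * (r0 + 1).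
have w0 : 0 < w by rewrite /w; lra.
have [j jk thin] := thin_annulus d F w0 k0 xi1.
set a := j%:R * w in thin; have a0 : 0 <= a by rewrite mulr_ge0 // ltW.
set m := a + 2 * (r0 + 1).
have ak : a + w <= k%:R * w.
  by rewrite -[X in _ + X]mul1r -mulrDl (ler_wpM2r (ltW w0)) // natr1 ler_nat.
have am : a + r0 <= m - r0 by rewrite /m; lra.
have mb : m + r0 + r0 <= a + w by rewrite /m /w; lra.
exists m; first by rewrite /m; lra.
set u := restr (close_to d F m) xi; set v := restr (predC (close_to d F m)) xi.
set uL := restr (annulus d F a m) xi; set vL := restr (annulus d F m (a + w)) xi.
have Hsum : sqnorm_on G (T xi) <= sqnorm_on G (T u) + sqnorm_on G (T v)
    + (sqnorm_on G (T uL) + sqnorm_on G (T vL)).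
  rewrite (op_restrD TC.1 (close_to d F m) (l2_seq us vxi)) /sqnorm_on -!big_split /=.
  apply: ler_sum => y _; rewrite csqD.
  by have := cross_term_le y am mb; lra.
have HL : sqnorm_on G (T uL) + sqnorm_on G (T vL) <= k%:R^-1.
  have am' : a <= m by rewrite /m; lra.
  have mw : m <= a + w by rewrite /m /w; lra.
  rewrite -(sqnorm_on_annulus_split d F s xi am' mw) in thin; apply: le_trans thin.
  by apply: lerD; apply: contr; apply: vanish_off_restr.
have mk : 0 <= m <= k%:R * w by apply/andP; split; rewrite /m /w in ak *; lra.
have := near_bound m mk; lra.
Qed.

End PeelLayer.

Section Gram.
Variables (R : realType) (X : choiceType).
Local Notation C := R[i].
Local Open Scope complex_scope.
Variables (T : (X -> C) -> (X -> C)) (K G : seq X).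

(* [compress] is T P_K and [gram] is P_K T^* P_G T P_K, written with the matrix
   coefficients of T. *)
Definition compress (eta : X -> C) (x : X) : C := \sum_(z <- K) eta z * coef T x z.

Definition gram (eta : X -> C) (y : X) : C :=
  if y \in K then \sum_(x <- G) (coef T x y)^* * compress eta x else 0.

Lemma vanish_off_gram eta : vanish_off K (gram eta).
Proof. by move=> y /negbTE yK; rewrite /gram yK. Qed.

Lemma eq_gram eta eta' : {in K, eta =1 eta'} -> gram eta = gram eta'.
Proof.
move=> e; suff ce : compress eta = compress eta' by rewrite /gram ce.
by apply/funext => x; rewrite /compress !big_seq; apply: eq_bigr => z /e ->.
Qed.

Lemma compress_linear a xi eta :
  compress (fun x => a * xi x + eta x) = (fun x => a * compress xi x + compress eta x).
Proof.
apply/funext => x; rewrite /compress mulr_sumr -big_split; apply: eq_bigr => z _.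
by rewrite mulrDl mulrA.
Qed.

Lemma gram_linear a xi eta :
  gram (fun x => a * xi x + eta x) = (fun y => a * gram xi y + gram eta y).
Proof.
apply/funext => y; rewrite /gram; case: (y \in K); last by rewrite mulr0 addr0.
rewrite compress_linear mulr_sumr -big_split; apply: eq_bigr => x _.
by rewrite /= mulrDr mulrCA.
Qed.

Lemma gramZ a xi : gram (fun x => a * xi x) = (fun y => a * gram xi y).
Proof.
have := gram_linear a xi (fun _ => 0).
have -> : gram (fun _ => 0) = (fun _ => 0).
  apply/funext => y; rewrite /gram /compress; case: ifP => // _.
  by rewrite big1 // => x _; rewrite big1 ?mulr0 // => z _; rewrite mul0r.
by under [fun x => _ + 0]funext do rewrite addr0; under [RHS]funext do rewrite addr0.
Qed.

Lemma gram_adjoint zeta eta :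
  \sum_(y <- K) (zeta y)^* * gram eta y = \sum_(x <- G) (compress zeta x)^* * compress eta x.
Proof.
transitivity (\sum_(y <- K) \sum_(x <- G) (zeta y)^* * ((coef T x y)^* * compress eta x)).
  by rewrite !big_seq; apply: eq_bigr => y yK; rewrite /gram yK mulr_sumr.
rewrite exchange_big /=; apply: eq_bigr => x _.
by rewrite /compress rmorph_sum mulr_suml; apply: eq_bigr => y _; rewrite rmorphM mulrA.
Qed.

Lemma gram_inner eta : \sum_(y <- K) (eta y)^* * gram eta y = (sqnorm_on G (compress eta))%:C.
Proof.
rewrite gram_adjoint /sqnorm_on (rmorph_sum (@real_complex R)).
by apply: eq_bigr => x _; rewrite csqJM.
Qed.

Hypotheses (bT : bounded_op T) (uK : uniq K).
Hypothesis contr : forall u, vanish_off K u -> sqnorm_on G (T u) <= sqnorm_on K u.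

Lemma compressE eta : compress eta = T (restr (mem K) eta).
Proof.
apply/funext => x; rewrite (op_expand bT x uK (vanish_off_mem _ _)) /compress !big_seq.
by apply: eq_bigr => z zK; rewrite /restr /= zK.
Qed.

Lemma sqnorm_on_compress_le eta : sqnorm_on G (compress eta) <= sqnorm_on K eta.
Proof.
rewrite compressE; apply: le_trans (contr (vanish_off_mem _ _)) _.
by rewrite (eq_sqnorm_on (g := eta)) // => z zK; rewrite /restr /= zK.
Qed.

Lemma sqnorm_on_gram_le eta : sqnorm_on K (gram eta) <= sqnorm_on G (compress eta).
Proof.
have e : sqnorm_on K (gram eta)
    = \sum_(x <- G) complex.Re ((compress (gram eta) x)^* * compress eta x).
  by rewrite sqnorm_onE -(raddf_sum (@complex.Re R)) -gram_adjoint.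
have : 2 * sqnorm_on K (gram eta) <= sqnorm_on G (compress (gram eta)) + sqnorm_on G (compress eta).
  by rewrite e mulr_sumr /sqnorm_on -big_split; apply: ler_sum => x _; apply: ReJM_le1.
by have := sqnorm_on_compress_le (gram eta); lra.
Qed.

Lemma sqnorm_on_gram_ge (b : R) eta : 0 < b ->
  b * sqnorm_on K eta <= sqnorm_on G (compress eta) ->
  b ^+ 2 * sqnorm_on K eta <= sqnorm_on K (gram eta).
Proof.
move=> b0 h.
have e : sqnorm_on G (compress eta) = \sum_(y <- K) complex.Re ((eta y)^* * gram eta y).
  by rewrite sqnorm_onE -(raddf_sum (@complex.Re R)) -gram_adjoint.
have : 2 * sqnorm_on G (compress eta) <= b * sqnorm_on K eta + sqnorm_on K (gram eta) / b.
  rewrite e mulr_sumr /sqnorm_on mulr_sumr mulr_suml -big_split.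
  by apply: ler_sum => y _; apply: ReJM_le.
move=> h2; have : b * sqnorm_on K eta <= sqnorm_on K (gram eta) / b by lra.
by rewrite ler_pdivlMr // mulrC mulrA -expr2.
Qed.

End Gram.

Arguments vanish_off_gram {R X} T K G eta.

Lemma supZl (R : realType) (E : set R) (k : R) : 0 < k -> has_sup E ->
  sup [set k * x | x in E] = k * sup E.
Proof.
move=> k0 [[x0 Ex0] [b hb]].
have ne : [set k * x | x in E] !=set0 by exists (k * x0), x0.
have hsE : has_sup E by split; [exists x0|exists b].
have ub : ubound [set k * x | x in E] (k * sup E).
  by move=> _ [x Ex <-]; rewrite ler_pM2l // sup_upper_bound.
apply/le_anti/andP; split; first exact: ge_sup.
rewrite -ler_pdivlMl //; apply: ge_sup; first by exists x0.
move=> x Ex; rewrite ler_pdivlMl //; apply: sup_upper_bound; last by exists x.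
by split => //; exists (k * sup E).
Qed.

Section GramOperator.
Variables (R : realType) (X : choiceType) (d : X -> X -> R) (r0 : R).
Local Notation C := R[i].
Local Open Scope complex_scope.
Variables (T : (X -> C) -> (X -> C)) (K G : seq X).
Hypotheses (md : is_metric d) (TC : in_CR d r0 T) (uK : uniq K).
Hypothesis contr : forall u, vanish_off K u -> sqnorm_on G (T u) <= sqnorm_on K u.

Lemma sqnorm_on_gram_le_norm2 eta : l2 eta -> sqnorm_on K (gram T K G eta) <= norm2 eta ^+ 2.
Proof.
move=> h; apply: le_trans (sqnorm_on_gram_le TC.1 uK contr eta) _.
by apply: le_trans (sqnorm_on_compress_le TC.1 uK contr eta) _; apply: sqnorm_on_le_norm2.
Qed.

Lemma bounded_gram : bounded_op (gram T K G).
Proof.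
split=> [xi _|a xi eta _ _|]; first exact: l2_seq uK (vanish_off_gram T K G xi).
  exact: gram_linear.
exists 1 => xi hxi; rewrite mul1r (norm2_seq uK (vanish_off_gram T K G xi)).
rewrite -(ger0_norm (norm2_ge0 xi)) -sqrtr_sqr ler_sqrt ?sqr_ge0 //.
exact: sqnorm_on_gram_le_norm2.
Qed.

Lemma positive_gram : positive_op (gram T K G).
Proof.
move=> eta _; rewrite (inner_seq _ uK (vanish_off_gram T K G eta)).
by rewrite gram_inner ler0c sqnorm_on_ge0.
Qed.

Lemma gram_propagation x y : coef (gram T K G) x y <> 0 -> d x y <= r0 + r0.
Proof.
move=> cxy; apply: contrapT => /negP; rewrite -ltNge => far; apply: cxy.
rewrite /coef /gram; case: ifP => // xK; rewrite big1_seq // => q /andP [_ qG].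
have [->|/eqP/TC.2 qx] := eqVneq (coef T q x) 0; first by rewrite rmorph0 mul0r.
rewrite /compress big1_seq ?mulr0 // => z /andP [_ zK]; rewrite deltaE.
case: eqP => [->|_]; last by rewrite mul0r.
have [->|/eqP/TC.2 qy] := eqVneq (coef T q y) 0; first by rewrite mulr0.
exfalso; have := dist_triangle md x q y; rewrite (distC md x q); lra.
Qed.

Lemma gram_restr eta :
  gram T K G eta = restr_ind [set x | x \in K] (gram T K G (restr_ind [set x | x \in K] eta)).
Proof.
have -> : gram T K G eta = gram T K G (restr_ind [set x | x \in K] eta).
  by apply: eq_gram => z zK; rewrite /restr_ind; case: pselect => //= /(_ zK).
apply/funext => y; rewrite [in RHS]/restr_ind; case: pselect => //= /negP yK.
exact: vanish_off_gram.
Qed.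

Lemma in_CR_gram : in_CR d (r0 + r0) (gram T K G).
Proof. by split; [exact: bounded_gram|exact: gram_propagation]. Qed.

Lemma norm2_gram_le eta : norm2 (gram T K G eta) <= Num.sqrt (sqnorm_on G (compress T K eta)).
Proof.
rewrite (norm2_seq uK (vanish_off_gram T K G eta)) ler_sqrt ?sqnorm_on_ge0 //.
exact: (sqnorm_on_gram_le TC.1 uK contr).
Qed.

Lemma opnorm_gram_ge (b : R) v : 0 < b -> vanish_off K v -> 0 < sqnorm_on K v ->
  b * sqnorm_on K v <= sqnorm_on G (T v) -> b <= opnorm (gram T K G).
Proof.
move=> b0 vv v0 bv; set l := Num.sqrt (sqnorm_on K v).
pose v' x := (l^-1)%:C * v x.
have vv' : vanish_off K v' by move=> x /vv; rewrite /v' => ->; rewrite mulr0.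
have nv' : norm2 v' = 1 by rewrite (norm2_seq uK vv') normalize_on // sqrtr1.
have Tv : compress T K v = T v.
  rewrite (compressE TC.1 uK); congr T; apply/funext => x; rewrite /restr /=.
  by case: ifP => // /negbT /vv ->.
have := @sqnorm_on_gram_ge _ _ T K G b v b0; rewrite Tv => /(_ bv) bgv.
apply: le_trans (le_opnorm bounded_gram (l2_seq uK vv') _); last by rewrite nv'.
rewrite (norm2_seq uK (vanish_off_gram T K G v')) /v' gramZ.
have -> : sqnorm_on K (fun y => (l^-1)%:C * gram T K G v y) = l^-2 * sqnorm_on K (gram T K G v).
  by rewrite sqnorm_onZ exprVn.
rewrite -(ger0_norm (ltW b0)) -sqrtr_sqr ler_sqrt ?mulr_ge0 ?sqnorm_on_ge0 ?invr_ge0 ?sqr_ge0 //.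
by rewrite sqr_sqrtr ?sqnorm_on_ge0 // ler_pdivlMl // mulrC.
Qed.

End GramOperator.

Section ScaledOperator.
Variables (R : realType) (X : choiceType).
Local Notation C := R[i].
Local Open Scope complex_scope.

Definition scale_op (k : R) (A : (X -> C) -> (X -> C)) (eta : X -> C) (y : X) : C :=
  k%:C * A eta y.

Variables (K : seq X) (A : (X -> C) -> (X -> C)).
Hypotheses (uK : uniq K) (vA : forall eta, vanish_off K (A eta)).

Lemma vanish_off_scale_op k eta : vanish_off K (scale_op k A eta).
Proof. by move=> y /(vA eta) Ay; rewrite /scale_op Ay mulr0. Qed.

Lemma norm2_scale_op k eta : 0 <= k -> norm2 (scale_op k A eta) = k * norm2 (A eta).
Proof.
move=> k0; rewrite (norm2_seq uK (vanish_off_scale_op k eta)) (norm2_seq uK (vA eta)).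
have -> : sqnorm_on K (scale_op k A eta) = k ^+ 2 * sqnorm_on K (A eta) by apply: sqnorm_onZ.
by rewrite sqrtrM ?sqr_ge0 // sqrtr_sqr ger0_norm.
Qed.

Lemma bounded_scale_op k : bounded_op A -> 0 <= k -> bounded_op (scale_op k A).
Proof.
move=> [_ linA [M HM]] k0; split=> [xi _|a xi eta hxi heta|].
- exact: l2_seq uK (vanish_off_scale_op k xi).
- by apply/funext => y; rewrite /scale_op linA // mulrDr mulrCA.
exists (k * M) => xi hxi; rewrite norm2_scale_op // -mulrA ler_wpM2l //; exact: HM.
Qed.

Lemma opnorm_scale_op k : bounded_op A -> 0 < k -> opnorm (scale_op k A) = k * opnorm A.
Proof.
move=> bA k0; rewrite /opnorm -supZl //; last exact: has_sup_opnorm.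
congr sup; apply/seteqP; split => [_ [xi hxi <-]|_ [_ [xi hxi <-] <-]].
  by exists (norm2 (A xi)); [exists xi|rewrite norm2_scale_op // ltW].
by exists xi => //; rewrite norm2_scale_op // ltW.
Qed.

Lemma positive_scale_op k : positive_op A -> 0 <= k -> positive_op (scale_op k A).
Proof.
move=> pA k0 eta heta; have := pA eta heta.
rewrite (inner_seq _ uK (vA eta)) (inner_seq _ uK (vanish_off_scale_op k eta)) => h.
under eq_bigr do rewrite /scale_op mulrCA.
by rewrite -mulr_sumr mulr_ge0 // ler0c.
Qed.

Lemma in_CR_scale_op d r k : in_CR d r A -> 0 <= k -> in_CR d r (scale_op k A).
Proof.
move=> [bA pA] k0; split; first exact: bounded_scale_op.
move=> x y; rewrite /coef /scale_op => /eqP.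
by rewrite mulf_eq0 negb_or => /andP [_ /eqP]; apply: pA.
Qed.

Lemma scale_op_restr (B : set X) k :
  (forall eta, A eta = restr_ind B (A (restr_ind B eta))) ->
  forall eta, scale_op k A eta = restr_ind B (scale_op k A (restr_ind B eta)).
Proof.
move=> AB eta; apply/funext => y; rewrite /scale_op AB /restr_ind.
by case: pselect => _ /=; rewrite ?mulr0.
Qed.

End ScaledOperator.

(* (3 + c)/4 < ||P_G T xi||^2 <= c^2 U + ||P_G T v||^2 + 1/k, where U + V = ||xi||^2 splits
   xi into its parts near and far from F. *)
Lemma far_mass_bound (R : realFieldType) (c U V Tv ik : R) : 0 < c < 1 -> 0 <= U -> 0 <= V ->
  U + V <= 1 -> ik < (1 - c) / 4 -> (3 + c) / 4 < c ^+ 2 * U + Tv + ik ->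
  0 < Tv /\ (1 + c) / 2 * V <= Tv.
Proof.
move=> /andP [c0 c1] U0 V0 UV ik_lt lt.
have cU : c ^+ 2 * U <= c ^+ 2 - c ^+ 2 * V.
  by rewrite -[X in X - _]mulr1 -mulrBr ler_wpM2l ?sqr_ge0 //; lra.
have c2c : c ^+ 2 <= c by rewrite expr2 ler_piMr // ltW.
split; first by have := mulr_ge0 (sqr_ge0 c) V0; lra.
have : 0 <= ((1 + c) / 2 - c ^+ 2) * (1 - V) by apply: mulr_ge0; lra.
by rewrite mulrBr mulr1 mulrBl; lra.
Qed.

Section Step.
Variables (R : realType) (X : choiceType) (d : X -> X -> R) (r0 c S : R).
Local Notation C := R[i].
Variable T : (X -> C) -> (X -> C).
Hypotheses (md : is_metric d) (TC : in_CR d r0 T) (r00 : 0 <= r0).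
Hypothesis oT : opnorm T = 1.
Hypothesis Tsmall : forall xi, l2 xi -> norm2 xi = 1 -> diam_le d (supp xi) S -> norm2 (T xi) < c.

Lemma sqnorm_on_op_small s G u : 0 <= c -> uniq s -> uniq G -> vanish_off s u ->
  diam_le d (supp u) S ->
  sqnorm_on G (T u) <= c ^+ 2 * sqnorm_on s u.
Proof.
move=> c0 us uG vu du; apply: (sqnorm_on_op_le TC.1 c0 us uG vu) => xi hxi nxi sxi.
by apply/ltW/Tsmall => //; apply: diam_le_sub du sxi (lexx _).
Qed.

Lemma sqnorm_on_compress_small K G eta : 0 <= c -> uniq K -> uniq G -> l2 eta -> norm2 eta = 1 ->
  diam_le d (supp eta) S -> sqnorm_on G (compress T K eta) <= c ^+ 2.
Proof.
move=> c0 uK uG heta neta deta; rewrite (compressE TC.1 uK).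
apply: le_trans (sqnorm_on_op_small c0 uK uG (vanish_off_mem K eta) _) _.
  by apply: diam_le_sub deta _ (lexx _) => x; rewrite /supp /restr /=; case: ifP.
rewrite -[X in _ <= X]mulr1 ler_wpM2l ?sqr_ge0 //.
rewrite (eq_sqnorm_on (g := eta)) => [|x xK]; last by rewrite /restr /= xK.
by rewrite -(expr1n _ 2) -neta; apply: sqnorm_on_le_norm2.
Qed.

Lemma exists_far_vector (F : seq X) (k : nat) : 0 < c < 1 -> 4 / (1 - c) < k%:R ->
  2 * (k%:R * (4 * (r0 + 1))) + sum_dist d F <= S ->
  exists K G v, [/\ uniq K /\ uniq G, {in K, forall x, x \notin F}, vanish_off K v,
    0 < sqnorm_on G (T v) & (1 + c) / 2 * sqnorm_on K v <= sqnorm_on G (T v)].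
Proof.
move=> c01 hk hS; have /andP [c0 c1] := c01; have bT := TC.1.
have k0 : (0 < k)%N by rewrite -(ltr0n R); apply: lt_trans hk; by rewrite divr_gt0 // subr_gt0.
have ik : k%:R^-1 < (1 - c) / 4.
  by rewrite -[ltRHS]invf_div ltf_pV2 ?posrE ?divr_gt0 ?ltr0n // subr_gt0.
have g1 : (3 + c) / 4 < 1 by lra.
have [s [xi [G [us vxi xi1 uG Txi]]]] := finite_approx bT oT g1.
have contr u : vanish_off s u -> sqnorm_on G (T u) <= sqnorm_on s u.
  by move=> vu; apply: sqnorm_on_op_contr.
have near m : 0 <= m <= k%:R * (4 * (r0 + 1)) ->
    sqnorm_on G (T (restr (close_to d F m) xi)) <= c ^+ 2 * sqnorm_on s (restr (close_to d F m) xi).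
  move=> /andP [m0 mk]; apply: sqnorm_on_op_small (ltW c0) us uG _ _; first exact: vanish_off_restr.
  move=> x y; rewrite /supp /restr /=.
  case: (boolP (close_to d F m x)) => xm /=; last by move=> /(_ erefl).
  case: (boolP (close_to d F m y)) => ym /= _; last by move=> /(_ erefl).
  by move=> _; apply: le_trans (close_to_dist md xm ym) _; lra.
have [m m0 Hm] := peel_layer md TC us vxi r00 uG k0 xi1 contr near.
set v := restr (predC (close_to d F m)) xi in Hm.
set K := [seq x <- s | ~~ close_to d F m x].
have vK : vanish_off K v.
  move=> x; rewrite mem_filter negb_and negbK /v /restr /= => /orP [->//|/vxi].
  by case: ifP.
have VK : sqnorm_on K v = sqnorm_on s v.
  rewrite /sqnorm_on big_filter [RHS](bigID (close_to d F m)) /= [X in _ = X + _]big1 ?add0r //.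
  by move=> x xm; rewrite /v /restr /= xm csq0.
have UV := sqnorm_on_restr s (close_to d F m) xi; rewrite -/v in UV.
have [] := far_mass_bound c01 (sqnorm_on_ge0 s (restr (close_to d F m) xi)) (sqnorm_on_ge0 s v)
  (_ : _ + _ <= 1) ik (lt_le_trans Txi Hm); first by rewrite -UV.
rewrite -VK => Tv0 Tvb; exists K, G, v; split => //; first by rewrite filter_uniq.
by move=> x; rewrite mem_filter => /andP [xm _]; apply: contra xm; apply: close_to_mem.
Qed.

End Step.

Definition localized_block (R : realType) (X : choiceType) (d : X -> X -> R) (r kappa s : R)
    (K : seq X) (A : (X -> R[i]) -> (X -> R[i])) : Prop :=
  [/\ in_CR d r A, positive_op A /\ opnorm A = 1,
    forall xi, A xi = restr_ind [set x | x \in K] (A (restr_ind [set x | x \in K] xi)) &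
    forall xi, l2 xi -> norm2 xi = 1 -> diam_le d (supp xi) s -> norm2 (A xi) <= kappa].

Lemma exists_localized_block (R : realType) (X : choiceType) (d : X -> X -> R) (r0 c s : R)
    (F : seq X) : is_metric d -> 0 <= r0 -> 0 < c < 1 -> 0 <= s ->
  (forall S, 0 < S -> exists T, [/\ in_CR d r0 T, opnorm T = 1 &
    forall xi, l2 xi -> norm2 xi = 1 -> diam_le d (supp xi) S -> norm2 (T xi) < c]) ->
  exists K A, {in K, forall x, x \notin F} /\ localized_block d (r0 + r0) (2 * c / (1 + c)) s K A.
Proof.
move=> md r00 c01 s0 notONL; have /andP [c0 c1] := c01.
set k := (Num.truncn (4 / (1 - c))).+1.
have hk : 4 / (1 - c) < k%:R by apply: truncnS_gt.
set S := s + 2 * (k%:R * (4 * (r0 + 1))) + sum_dist d F.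
have kw0 : 0 < k%:R * (4 * (r0 + 1)) by rewrite mulr_gt0 ?ltr0n //; lra.
have DF0 := sum_dist_ge0 md F.
have sS : s <= S by rewrite /S; lra.
have S0 : 0 < S by rewrite /S; lra.
have [T [TC oT Tsmall]] := notONL S S0.
have hS : 2 * (k%:R * (4 * (r0 + 1))) + sum_dist d F <= S by rewrite /S; lra.
have [K [G [v [[uK uG] KF vK Tv0 Tvb]]]] := exists_far_vector md TC r00 oT Tsmall c01 hk hS.
have contr u : vanish_off K u -> sqnorm_on G (T u) <= sqnorm_on K u.
  by move=> vu; apply: (sqnorm_on_op_contr TC.1).
have beta0 : 0 < (1 + c) / 2 by lra.
have v0 : 0 < sqnorm_on K v by apply: lt_le_trans Tv0 (contr _ vK).
have alpha_ge := opnorm_gram_ge TC uK contr beta0 vK v0 Tvb.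
set alpha := opnorm (gram T K G) in alpha_ge.
have alpha0 : 0 < alpha by apply: lt_le_trans alpha_ge.
have vA := vanish_off_gram T K G.
exists K, (scale_op alpha^-1 (gram T K G)); split => //; split.
- by apply: (in_CR_scale_op uK vA (in_CR_gram md TC uK contr)); rewrite invr_ge0 ltW.
- split; first by apply: (positive_scale_op uK vA (positive_gram T G uK)); rewrite invr_ge0 ltW.
  rewrite (opnorm_scale_op uK vA (bounded_gram TC uK contr)) ?invr_gt0 //.
  by rewrite mulVf ?gt_eqF.
- exact: scale_op_restr (gram_restr T K G).
move=> eta heta neta deta.
rewrite (norm2_scale_op uK vA) ?invr_ge0 ?(ltW alpha0) //.
have gram_c : norm2 (gram T K G eta) <= c.
  have small := sqnorm_on_compress_small TC Tsmall (ltW c0) uK uG heta neta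
    (diam_le_sub deta (fun _ => id) sS).
  apply: le_trans (norm2_gram_le TC uK contr eta) _.
  by rewrite -(ger0_norm (ltW c0)) -sqrtr_sqr ler_sqrt ?sqr_ge0.
have -> : 2 * c / (1 + c) = ((1 + c) / 2)^-1 * c by rewrite invf_div mulrAC.
apply: ler_pM => //; first by rewrite invr_ge0 ltW.
  exact: norm2_ge0.
by rewrite lef_pV2 ?posrE.
Qed.

Lemma not_ONLP (R : realType) (X : choiceType) (d : X -> X -> R) : ~ ONL d ->
  exists r0 c, [/\ 0 <= r0, 0 < c < 1 & forall S, 0 < S -> exists T, [/\ in_CR d r0 T,
    opnorm T = 1 & forall xi, l2 xi -> norm2 xi = 1 -> diam_le d (supp xi) S -> norm2 (T xi) < c]].
Proof.
move=> nONL; apply: contrapT => H; apply: nONL => r c r0 hc.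
apply: contrapT => HS; apply: H; exists r, c; split => // S S0.
apply: contrapT => HT; apply: HS; exists S; split => // T TC oT.
apply: contrapT => Hxi; apply: HT; exists T; split => // xi h1 h2 h3.
by rewrite ltNge; apply/negP => h4; apply: Hxi; exists xi; split.
Qed.

Lemma exists_disjoint_blocks (T : eqType) (A : Type) (P : nat -> seq T -> A -> Prop) :
  (forall (F : seq T) n, exists K a, {in K, forall x, x \notin F} /\ P n K a) ->
  exists (K : nat -> seq T) (a : nat -> A), (forall n, P n (K n) (a n)) /\
    forall n m, n <> m -> [set x | x \in K n] `&` [set x | x \in K m] = set0.
Proof.
move=> blockP.
have block (F : seq T) n :
    exists Ka : seq T * A, {in Ka.1, forall x, x \notin F} /\ P n Ka.1 Ka.2.
  by have [K [a ?]] := blockP F n; exists (K, a).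
pose pick F n := projT1 (cid (block F n)).
have spec (F : seq T) n : {in (pick F n).1, forall x, x \notin F} /\ P n (pick F n).1 (pick F n).2.
  exact: projT2 (cid (block F n)).
pose used := fix used n := if n is n'.+1 then used n' ++ (pick (used n') n').1 else [::].
pose K n := (pick (used n) n).1.
have K_used m n : (m < n)%N -> {subset K m <= used n}.
  elim: n => [//|n IH]; rewrite ltnS leq_eqVlt => /orP [/eqP -> x xm|mn x xm] /=.
    by rewrite mem_cat xm orbT.
  by rewrite mem_cat IH.
exists K, (fun n => (pick (used n) n).2); split => [n|]; first by case: (spec (used n) n).
move=> n m nm; apply/seteqP; split => // x [/= xn xm].
wlog mn : n m nm xn xm / (m < n)%N.
  move=> H; case: (ltngtP m n) => [mn|mn|mn]; first exact: (H n m).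
    by apply: (H m n) => // e; apply: nm.
  by apply: nm; rewrite mn.
by case: (spec (used n) n) => /(_ x xn); rewrite (K_used _ _ mn x xm).
Qed.

Theorem lemma4p2 (R : realType) (X : choiceType) (d : X -> X -> R) :
  is_metric d -> bounded_geometry d -> ~ ONL d ->
  exists (r kappa : R) (T : nat -> (X -> R[i]) -> (X -> R[i]))
         (B : nat -> set X) (S : nat -> R),
    [/\ 0 < r /\ kappa < 1,
        (forall n, in_CR d r (T n)) /\ (forall n, finite_set (B n)) /\ (forall n, 0 < S n) /\
        (* (a) *) (forall n, S n < S n.+1) /\ (S @ \oo --> +oo),
        (* (b) *) (forall n, positive_op (T n) /\ opnorm (T n) = 1) /\
        (* (c) *) (forall n m, n <> m -> B n `&` B m = set0),
        (* (d) *) (forall n xi, l2 xi -> T n xi = restr_ind (B n) (T n (restr_ind (B n) xi))) &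
        (* (e) *) (forall n xi, l2 xi -> norm2 xi = 1 -> diam_le d (supp xi) (S n) ->
                    norm2 (T n xi) <= kappa)].
Proof.
move=> md _ /not_ONLP [r0 [c [r00 c01 notONL]]]; have /andP [c0 c1] := c01.
set kappa := 2 * c / (1 + c).
have [K [A [blockA disjK]]] := exists_disjoint_blocks
  (fun F n => exists_localized_block F md r00 c01 (ler0n _ n.+1) notONL).
exists (r0 + r0 + 1), kappa, A, (fun n => [set x | x \in K n]), (fun n => n.+1%:R).
split => //.
- by split; [lra|rewrite ltr_pdivrMr; lra].
- split; first by move=> n; case: (blockA n) => /(in_CR_le (ler_wpDr ler01 (lexx _))).
  split; first by move=> n; apply: finite_seq.
  split; first by move=> n; rewrite ltr0n.
  split; first by move=> n; rewrite ltr_nat.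
  apply: (ger_cvgy _ cvgr_idn); apply: nearW => n; rewrite ler_nat; exact: leqnSn.
- by split => // n; case: (blockA n).
- by move=> n xi _; case: (blockA n).
- by move=> n xi h1 h2 h3; case: (blockA n) => _ _ _; apply.
Qed.
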